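(* Let $g:\mathbb{R}^n\to\mathbb{R}$ be a convex function and let $\mathcal{S}=\{x\in\mathbb{R}^n : g(x)\le 0\}$. Let $f_d:\mathbb{R}^n\to\mathbb{R}^n$ be continuously differentiable and consider the discrete system $x_{k+1}=f_d(x_k)$. Assume that there exists $x^0\in\mathbb{R}^n$ with $g(x^0)<0$, and that the function $x\mapsto g(f_d(x))$ is concave. Then $\mathcal{S}$ is an invariant set for this discrete system if and only if there exists $\alpha\ge 0$ such that $$\alpha g(x)-g(f_d(x))\ge 0\quad\text{for all } x\in\mathbb{R}^n.$$ Moreover, if $g$ and $x\mapsto g(f_d(x))$ are quadratic functions, then the same equivalence holds without the assumption that $x\mapsto g(f_d(x))$ is concave.
   Context: A set $\mathcal{S}\subseteq\mathbb{R}^n$ is an invariant set for the discrete system $x_{k+1}=f_d(x_k)$ if $x_k\in\mathcal{S}$ implies $x_{k+1}\in\mathcal{S}$ for all $k\in\mathbb{N}$. *)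

(* R^n is rendered as row vectors 'rV[R]_n. *)
From HB Require Import structures.
From mathcomp Require Import all_boot all_order all_algebra.
From mathcomp Require Import all_classical all_reals all_analysis.
Set Implicit Arguments. Unset Strict Implicit. Unset Printing Implicit Defensive.
Import Order.TTheory GRing.Theory Num.Theory.
Import numFieldNormedType.Exports.
Local Open Scope ring_scope.

Section Defs.
Variables (R : realType) (n : nat).
Notation V := 'rV[R]_n.

Definition convex_fun (h : V -> R) : Prop :=
  forall (x y : V) (t : R), 0 <= t -> t <= 1 ->
    h ((1 - t) *: x + t *: y) <= (1 - t) * h x + t * h y.

Definition concave_fun (h : V -> R) : Prop :=
  forall (x y : V) (t : R), 0 <= t -> t <= 1 ->
    (1 - t) * h x + t * h y <= h ((1 - t) *: x + t *: y).

Definition quadratic_fun (h : V -> R) : Prop :=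
  exists (A : 'M[R]_n) (b : V) (c : R),
    forall x : V, h x = (x *m A *m x^T) 0 0 + (b *m x^T) 0 0 + c.

(* continuously differentiable map R^n -> R^n: differentiable everywhere and
   the derivative x |-> Df(x) is continuous (tested pointwise on each vector,
   which is equivalent in finite dimension) *)
Definition C1_map (f : V -> V) : Prop :=
  (forall x : V, differentiable f x) /\
  (forall v : V, continuous (fun x : V => ('d f x : V -> V) v)).

Definition invariant_set (f : V -> V) (S : set V) : Prop :=
  forall xs : nat -> V, (forall k, xs k.+1 = f (xs k)) ->
    forall k, S (xs k) -> S (xs k.+1).

Definition sublevel0 (g : V -> R) : set V := [set x | g x <= 0].

End Defs.

From HB Require Import structures.
From mathcomp Require Import all_boot all_order all_algebra.
From mathcomp Require Import all_classical all_reals all_analysis.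
From mathcomp Require Import ring lra.
Import Order.TTheory GRing.Theory Num.Theory.
Import numFieldNormedType.Exports.
Local Open Scope ring_scope.

(* Given
   a Slater point, such an implication [g <= 0 -> h <= 0] is certified by a
   multiplier [alpha >= 0] with [h <= alpha g] as soon as every ratio [h/g] on
   [g > 0] is below every ratio [h/g] on [g < 0]; take [alpha] to be the
   supremum of the former.  For convex [g] and concave [h] this comparison of
   ratios follows by evaluating at the point of the segment [[x, y]] where the
   convex interpolation of [g] vanishes.  For quadratic [g] and [h] one restricts
   to the line through [x] and [y] and compares the two one-variable quadratics
   at the roots of the first. *)

Section QuadraticOnALine.
Variable R : rcfType.
Implicit Types a b c p q r s t : R.

Lemma quadratic_le0_ray_lead_le0 p q r s :
  (forall t, s <= t -> p * t ^+ 2 + q * t + r <= 0) -> p <= 0.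
Proof.
move=> le0; rewrite leNgt; apply/negP => p_gt0.
pose t := 1 + `|s| + (`|q| + `|r|) / p.
have qr_ge0 : 0 <= (`|q| + `|r|) / p by rewrite divr_ge0 ?addr_ge0 // ltW.
have t_ge1 : 1 <= t by have := normr_ge0 s; rewrite /t; lra.
have t_ges : s <= t by have := ler_norm s; rewrite /t; lra.
have pt : p * t = p * (1 + `|s|) + (`|q| + `|r|) by rewrite /t; field; rewrite gt_eqF.
have pt_ge : p + `|q| + `|r| <= p * t.
  by rewrite pt; have := mulr_ge0 (ltW p_gt0) (normr_ge0 s); lra.
have q_ge : - `|q| <= q by rewrite lerNl -normrN ler_norm.
have r_ge : - `|r| <= r by rewrite lerNl -normrN ler_norm.
have : t * (p + `|r|) <= t * (p * t + q) by rewrite ler_pM2l; lra.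
have : 1 * (p + `|r|) <= t * (p + `|r|) by rewrite ler_pM2r ?ltr_pwDl.
have := le0 t t_ges; rewrite expr2; lra.
Qed.

Lemma convex_quadratic_roots a b c : 0 < a -> 0 < c -> a + b + c < 0 ->
  exists t1 t2, [/\ 0 < t1 < 1, 1 < t2,
    a * t1 ^+ 2 + b * t1 + c = 0 & a * t2 ^+ 2 + b * t2 + c = 0].
Proof.
move=> a_gt0 c_gt0 sum_lt0.
pose delta := b ^+ 2 - 4 * a * c.
have delta_gt0 : 0 < delta.
  have : (a + c) ^+ 2 < b ^+ 2 by rewrite -[b ^+ 2]sqrrN !expr2 ltr_pM //; lra.
  by have := sqr_ge0 (a - c); rewrite /delta !expr2; nra.
pose sq := Num.sqrt delta.
have sq2 : sq ^+ 2 = delta by rewrite sqr_sqrtr // ltW.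
have sq_gt0 : 0 < sq by rewrite sqrtr_gt0.
pose t1 := (- b - sq) / (2 * a); pose t2 := (- b + sq) / (2 * a).
have a_neq0 : a != 0 by rewrite gt_eqF.
have factor t : a * t ^+ 2 + b * t + c = a * (t - t1) * (t - t2).
  have -> : c = (b ^+ 2 - sq ^+ 2) / (4 * a) by rewrite sq2 /delta; field.
  by rewrite /t1 /t2; field.
have t1_lt_t2 : t1 < t2 by rewrite /t1 /t2 ltr_pM2r ?invr_gt0 ?mulr_gt0 //; lra.
have prod0 : 0 < a * (t1 * t2) by have := factor 0; rewrite mulrA; nra.
have prod1 : a * ((1 - t1) * (1 - t2)) < 0 by have := factor 1; rewrite mulrA; nra.
rewrite pmulr_rgt0 // in prod0; rewrite pmulr_rlt0 // in prod1.
exists t1, t2; split; [nra | nra | by rewrite factor subrr mulr0 mul0r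
                                | by rewrite factor subrr mulr0].
Qed.

Lemma quadratic_sublevel_cross a b c p q r :
  0 <= a -> 0 < c -> a + b + c < 0 ->
  (forall t, 0 < t -> a * t ^+ 2 + b * t + c <= 0 -> p * t ^+ 2 + q * t + r <= 0) ->
  (p + q + r) * c <= r * (a + b + c).
Proof.
move=> a_ge0 c_gt0 sum_lt0 sub.
pose e := c * p - r * a; pose f := c * q - r * b.
suff : e + f <= 0 by rewrite /e /f; lra.
(* At a root [t > 0] of the first quadratic, [t (e t + f)] equals
   [c (p t^2 + q t + r) <= 0]; so the affine [e t + f] is nonpositive at a root
   below 1 and at a root above 1, or, when [a = 0], at a root below 1 with
   slope [e = c p <= 0]. *)
have root_le0 t : 0 < t -> a * t ^+ 2 + b * t + c = 0 -> e * t + f <= 0.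
  move=> t_gt0 root; have := sub t t_gt0; rewrite root lexx => /(_ isT) psi_le0.
  have : t * (e * t + f) = c * (p * t ^+ 2 + q * t + r) - r * (a * t ^+ 2 + b * t + c).
    by rewrite /e /f; ring.
  rewrite root mulr0 subr0 => /eqP; rewrite -(pmulr_rle0 _ t_gt0) => /eqP ->.
  by rewrite pmulr_rle0.
move: a_ge0; rewrite le_eqVlt => /orP[/eqP a0 | a_gt0].
  subst a.
  pose t1 := c / - b.
  have b_lt0 : b < 0 by lra.
  have bt1 : b * t1 = - c by rewrite /t1; field; rewrite lt_eqF.
  have t1_gt0 : 0 < t1 by rewrite /t1 divr_gt0 // oppr_gt0.
  have t1_lt1 : t1 < 1 by rewrite /t1 ltr_pdivrMr; lra.
  have p_le0 : p <= 0.
    apply: (@quadratic_le0_ray_lead_le0 _ q r t1) => t t_ge_t1.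
    by apply: sub; nra.
  have := root_le0 t1 t1_gt0; rewrite mul0r add0r bt1 addNr => /(_ erefl).
  have e_le0 : e <= 0 by rewrite /e mulr0 subr0 pmulr_rle0.
  nra.
have [t1 [t2 [/andP[t1_gt0 t1_lt1] t2_gt1 root1 root2]]] :=
  convex_quadratic_roots _ _ _ a_gt0 c_gt0 sum_lt0.
have := root_le0 t1 t1_gt0 root1; have := root_le0 t2 (lt_trans ltr01 t2_gt1) root2.
have : (t2 - t1) * (e + f) = (t2 - 1) * (e * t1 + f) + (1 - t1) * (e * t2 + f) by ring.
nra.
Qed.

End QuadraticOnALine.

Section Multiplier.
Context {R : realType} {T : Type} (g h : T -> R).

(* [h/g] on [g > 0] is below [h/g] on [g < 0], with denominators cleared. *)
Definition ratio_sep := forall x y, 0 < g x -> g y < 0 -> h y * g x <= h x * g y.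

Lemma multiplier_sublevel :
  (exists alpha, 0 <= alpha /\ forall x, 0 <= alpha * g x - h x) ->
  forall x, g x <= 0 -> h x <= 0.
Proof.
move=> [alpha [alpha_ge0 mult]] x gx_le0.
by have := mult x; have := mulr_ge0_le0 alpha_ge0 gx_le0; lra.
Qed.

(* [alpha] is the supremum of [0] and the ratios [h x / g x] with [g x > 0]. *)
Lemma ratio_sep_multiplier :
  (forall x, g x <= 0 -> h x <= 0) -> (exists x0, g x0 < 0) -> ratio_sep ->
  exists alpha, 0 <= alpha /\ forall x, 0 <= alpha * g x - h x.
Proof.
move=> sub [x0 gx0_lt0] sep.
pose E := [set r : R | r = 0 \/ exists2 x, 0 < g x & r = h x / g x]%classic.
have E_ub y : g y < 0 -> ubound E (h y / g y).
  move=> gy_lt0 r [->|[x gx_gt0 ->]].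
    by rewrite -mulrNN -invrN divr_ge0 // oppr_ge0 ?sub // ltW.
  by rewrite ler_pdivrMr // mulrC mulrA ler_ndivlMr // mulrC sep.
have E_sup : has_sup E by split; [exists 0; left | exists (h x0 / g x0); exact: E_ub].
exists (sup E); split; first by apply: sup_upper_bound => //; left.
move=> x; rewrite subr_ge0.
have [gx_lt0|gx_gt0|gx0] := ltgtP (g x) 0.
- have : sup E <= h x / g x by apply: ge_sup; [exists 0; left | exact: E_ub].
  by rewrite ler_ndivlMr.
- have : sup E >= h x / g x by apply: sup_upper_bound => //; right; exists x.
  by rewrite ler_pdivrMr.
- by rewrite gx0 mulr0; apply: sub; rewrite gx0.
Qed.

End Multiplier.

Section SublevelInvariance.
Variables (R : realType) (n : nat).
Implicit Types (g h : 'rV[R]_n -> R) (x y : 'rV[R]_n).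

Lemma invariant_setP (f : 'rV[R]_n -> 'rV[R]_n) (S : set 'rV[R]_n) :
  invariant_set f S <-> forall x, S x -> S (f x).
Proof.
split=> [fS x Sx | fS xs xsS k]; last by rewrite xsS; exact: fS.
exact: (fS (fun k => iter k f x) (fun=> erefl) 0%N Sx).
Qed.

Lemma convex_concave_ratio_sep g h :
  convex_fun g -> concave_fun h -> (forall x, g x <= 0 -> h x <= 0) ->
  ratio_sep g h.
Proof.
move=> g_cvx h_ccv sub x y gx_gt0 gy_lt0.
have D_gt0 : 0 < g x - g y by lra.
pose s := g x / (g x - g y).
have s_ge0 : 0 <= s by rewrite divr_ge0 // ltW.
have s_le1 : s <= 1 by rewrite ler_pdivrMr // mul1r; lra.
have g_comb : (1 - s) * g x + s * g y = 0 by rewrite /s; field; rewrite gt_eqF.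
have h_comb : (1 - s) * h x + s * h y = (g x * h y - g y * h x) / (g x - g y).
  by rewrite /s; field; rewrite gt_eqF.
have := h_ccv x y s s_ge0 s_le1; have := g_cvx x y s s_ge0 s_le1.
rewrite g_comb h_comb => /sub hz_le0 /le_trans /(_ hz_le0).
rewrite ler_pdivrMr // mul0r; lra.
Qed.

Lemma quadratic_fun_segment h : quadratic_fun h -> forall x y, exists p q r,
  forall t, h ((1 - t) *: x + t *: y) = p * t ^+ 2 + q * t + r.
Proof.
move=> [A [b [c hA]]] x y.
suff [p [q [r line]]] : exists p q r,
    forall t, h (x + t *: (y - x)) = p * t ^+ 2 + q * t + r.
  by exists p, q, r => t; rewrite -line scalerBl scale1r scalerBr addrAC addrA.
move: (y - x) => d.
exists ((d *m A *m d^T) 0 0),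
  ((x *m A *m d^T) 0 0 + (d *m A *m x^T) 0 0 + (b *m d^T) 0 0),
  ((x *m A *m x^T) 0 0 + (b *m x^T) 0 0 + c) => t.
rewrite hA linearD /= linearZ /= !mulmxDl !mulmxDr -!scalemxAl -!scalemxAr !mxE.
ring.
Qed.

Lemma quadratic_ratio_sep g h :
  convex_fun g -> quadratic_fun g -> quadratic_fun h ->
  (forall x, g x <= 0 -> h x <= 0) -> ratio_sep g h.
Proof.
move=> g_cvx g_quad h_quad sub x y gx_gt0 gy_lt0.
have [a [b [c g_seg]]] := quadratic_fun_segment _ g_quad x y.
have [p [q [r h_seg]]] := quadratic_fun_segment _ h_quad x y.
have seg0 : (1 - 0) *: x + 0 *: y = x by rewrite subr0 scale1r scale0r addr0.
have seg1 : (1 - 1) *: x + 1 *: y = y by rewrite subrr scale0r add0r scale1r.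
have gx : g x = c by rewrite -seg0 g_seg; ring.
have gy : g y = a + b + c by rewrite -seg1 g_seg; ring.
have hx : h x = r by rewrite -seg0 h_seg; ring.
have hy : h y = p + q + r by rewrite -seg1 h_seg; ring.
have a_ge0 : 0 <= a.
  have := g_cvx x y 2^-1; rewrite g_seg gx gy invr_ge0 invf_le1 ?ler0n ?ler1n //.
  by move=> /(_ isT isT); lra.
rewrite gx gy hx hy.
apply: quadratic_sublevel_cross => //; [by rewrite -gx | by rewrite -gy |].
by move=> t _; rewrite -g_seg -h_seg; exact: sub.
Qed.

Lemma invariant_sublevel_multiplierP g (f : 'rV[R]_n -> 'rV[R]_n) :
  (exists x0, g x0 < 0) ->
  ((forall x, g x <= 0 -> g (f x) <= 0) -> ratio_sep g (fun x => g (f x))) ->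
  invariant_set f (sublevel0 g) <->
  exists alpha, 0 <= alpha /\ forall x, 0 <= alpha * g x - g (f x).
Proof.
move=> slater sep; split=> [/invariant_setP sub | mult].
  exact: ratio_sep_multiplier sub slater (sep sub).
by apply/invariant_setP; exact: multiplier_sublevel mult.
Qed.

End SublevelInvariance.

Theorem theorem6 (R : realType) (n : nat)
    (g : 'rV[R]_n -> R) (fd : 'rV[R]_n -> 'rV[R]_n) :
  convex_fun g -> C1_map fd -> (exists x0 : 'rV[R]_n, g x0 < 0) ->
  (concave_fun (fun x => g (fd x)) ->
     (invariant_set fd (sublevel0 g) <->
      exists alpha : R, 0 <= alpha /\
        forall x : 'rV[R]_n, 0 <= alpha * g x - g (fd x)))
  /\
  (quadratic_fun g -> quadratic_fun (fun x => g (fd x)) ->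
     (invariant_set fd (sublevel0 g) <->
      exists alpha : R, 0 <= alpha /\
        forall x : 'rV[R]_n, 0 <= alpha * g x - g (fd x))).
Proof.
move=> g_cvx _ slater.
split=> [gf_ccv | g_quad gf_quad]; apply: invariant_sublevel_multiplierP => // sub.
- exact: convex_concave_ratio_sep.
- exact: quadratic_ratio_sep.
Qed.
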